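(* Let $y$ be the solution of the problem $\varepsilon^2 y''(x)=f(x,y)$ on $(0,1)$, $y(0)=y(1)=0$, with $f$ and the Shishkin mesh $\{x_i\}_{i=0}^N$ as described in the context, and let $F$ be the discrete operator defined in the context. Assume that $\varepsilon\leqslant C_0/N$ for some constant $C_0>0$. Then there is a constant $C>0$ independent of $N$ and $\varepsilon$ such that $$|(Fy)_{N/4}|\leqslant\frac{C}{N},$$ where $(Fy)_{N/4}$ is the component with index $N/4$ (corresponding to the mesh point $x_{N/4}=\lambda$) of $F$ applied to the vector $(y(x_0),\ldots,y(x_N))^T$.
   Context: Problem: $\varepsilon^2y''(x)=f(x,y)$ on $(0,1)$, $y(0)=y(1)=0$, where $\varepsilon>0$ is a small parameter, $f\in C^k([0,1]\times\mathbb{R})$ for some $k\geq 2$, and $f_y=\partial f/\partial y\geq m>0$ on $[0,1]\times\mathbb{R}$ for a constant $m$; this problem has a unique solution $y$. Shishkin mesh: $N$ is a positive integer divisible by 4, $\lambda=\min\{1/4,\,2\varepsilon\ln N/\sqrt{m}\}$, and it is assumed that $\lambda=2\varepsilon\ln N/\sqrt{m}$. The mesh $0=x_0<x_1<\cdots<x_N=1$ is equidistant on each of $[0,\lambda]$ (with $N/4$ subintervals), $[\lambda,1-\lambda]$ (with $N/2$ subintervals) and $[1-\lambda,1]$ (with $N/4$ subintervals); thus $x_{N/4}=\lambda$, $x_{3N/4}=1-\lambda$, subintervals in $[0,\lambda]\cup[1-\lambda,1]$ have length $4\lambda/N$ and those in $[\lambda,1-\lambda]$ have length $2(1-2\lambda)/N$.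 Scheme: $\gamma$ is a constant with $\gamma\geq f_y$, and $\beta=\sqrt{\gamma}/\varepsilon$. For $i=1,\ldots,N$ let $\ell_i=x_i-x_{i-1}$, $d_i=\beta/\tanh(\beta\ell_i)$, $a_i=\beta/\sinh(\beta\ell_i)$, $\Delta d_i=d_i-a_i$. For $v=(v_0,\ldots,v_N)^T\in\mathbb{R}^{N+1}$ define $Fv\in\mathbb{R}^{N+1}$ by $(Fv)_0=v_0$, $(Fv)_N=v_N$ and, for $i=1,\ldots,N-1$, $$(Fv)_i=\frac{\gamma}{\Delta d_i+\Delta d_{i+1}}\Big[\tfrac{a_i+d_i}{2}v_{i-1}-\big(\tfrac{a_i+d_i}{2}+\tfrac{a_{i+1}+d_{i+1}}{2}\big)v_i+\tfrac{a_{i+1}+d_{i+1}}{2}v_{i+1}-\tfrac{\Delta d_i}{\gamma}f\big(\tfrac{x_{i-1}+x_i}{2},\tfrac{v_{i-1}+v_i}{2}\big)-\tfrac{\Delta d_{i+1}}{\gamma}f\big(\tfrac{x_{i}+x_{i+1}}{2},\tfrac{v_{i}+v_{i+1}}{2}\big)\Big].$$ *)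

From Stdlib Require Import Reals Lra Lia.
From Coquelicot Require Import Coquelicot.
Open Scope R_scope.

Definition strip (p : R * R) : Prop := 0 <= fst p <= 1.

Definition cont_on_strip (g : R -> R -> R) : Prop :=
  forall x v, 0 <= x <= 1 ->
    filterlim (fun p : R * R => g (fst p) (snd p))
              (within strip (locally (x, v))) (locally (g x v)).

(** f ∈ C^2([0,1] x R) with first partial derivative in the second variable fy:
    all partial derivatives up to order 2 exist on the interior (0,1) x R
    (in y also on the boundary lines, y being an open direction) and extend
    continuously to [0,1] x R. *)
Definition C2_strip (f fy : R -> R -> R) : Prop :=
  exists fx fxx fxy fyx fyy : R -> R -> R,
    cont_on_strip f /\ cont_on_strip fx /\ cont_on_strip fy /\
    cont_on_strip fxx /\ cont_on_strip fxy /\ cont_on_strip fyx /\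
    cont_on_strip fyy /\
    (forall x v, 0 < x < 1 ->
       is_derive (fun t => f t v) x (fx x v) /\
       is_derive (fun t => fx t v) x (fxx x v) /\
       is_derive (fun t => fy t v) x (fyx x v)) /\
    (forall x v, 0 <= x <= 1 ->
       is_derive (fun t => f x t) v (fy x v) /\
       is_derive (fun t => fx x t) v (fxy x v) /\
       is_derive (fun t => fy x t) v (fyy x v)).

Definition is_solution (eps : R) (f : R -> R -> R) (y : R -> R) : Prop :=
  y 0 = 0 /\ y 1 = 0 /\
  filterlim y (at_right 0) (locally 0) /\
  filterlim y (at_left 1) (locally 0) /\
  exists y1 y2 : R -> R,
    forall x, 0 < x < 1 ->
      is_derive y x (y1 x) /\ is_derive y1 x (y2 x) /\
      eps ^ 2 * y2 x = f x (y x).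

Definition shishkin_lambda (eps m : R) (N : nat) : R :=
  Rmin (1 / 4) (2 * eps * ln (INR N) / sqrt m).

Definition shishkin_mesh (eps m : R) (N : nat) (i : nat) : R :=
  let lam := shishkin_lambda eps m N in
  if (i <=? N / 4)%nat then INR i * (4 * lam / INR N)
  else if (i <=? 3 * N / 4)%nat then
    lam + INR (i - N / 4) * (2 * (1 - 2 * lam) / INR N)
  else (1 - lam) + INR (i - 3 * N / 4) * (4 * lam / INR N).

Definition F_op (gamma eps : R) (f : R -> R -> R) (xm : nat -> R) (N : nat)
    (v : nat -> R) (i : nat) : R :=
  let beta := sqrt gamma / eps in
  let l := fun j : nat => xm j - xm (j - 1)%nat in
  let d := fun j : nat => beta / tanh (beta * l j) in
  let a := fun j : nat => beta / sinh (beta * l j) in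
  let Dd := fun j : nat => d j - a j in
  if (i =? 0)%nat then v 0%nat
  else if (i =? N)%nat then v N
  else
    gamma / (Dd i + Dd (i + 1)%nat) *
    ( (a i + d i) / 2 * v (i - 1)%nat
      - ((a i + d i) / 2 + (a (i + 1)%nat + d (i + 1)%nat) / 2) * v i
      + (a (i + 1)%nat + d (i + 1)%nat) / 2 * v (i + 1)%nat
      - Dd i / gamma * f ((xm (i - 1)%nat + xm i) / 2) ((v (i - 1)%nat + v i) / 2)
      - Dd (i + 1)%nat / gamma
          * f ((xm i + xm (i + 1)%nat) / 2) ((v i + v (i + 1)%nat) / 2) ).

From Stdlib Require Import Reals Lra Lia Psatz Classical ClassicalEpsilon.
From Coquelicot Require Import Coquelicot.
Open Scope R_scope.

(* Let q = N/4, beta = sqrt gamma / eps, h = x_q - x_(q-1) = 4 lambda / N and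
   H = x_(q+1) - x_q = 2 (1 - 2 lambda) / N.  Since coth s + csch s = 1 / tanh (s/2) and
   coth s - csch s = tanh (s/2), the scheme at an interior node reads
     (Fv)_q = gamma (v_(q-1) - v_q) / (2 T1 (T1 + T2)) + gamma (v_(q+1) - v_q) / (2 T2 (T1 + T2))
              - (T1 f_1 + T2 f_2) / (T1 + T2)
   with T1 = tanh (beta h / 2) and T2 = tanh (beta H / 2).  As eps N <= C0,
   beta H >= sqrt gamma / C0, so T2 is bounded below, while 1 / T1 <= 1 + 2 / (beta h),
   which is O(N / ln N).
   A comparison argument with the barrier exp (-k x) + exp (-k (1 - d - x)), k = sqrt m / eps,
   bounds the increments of the solution,
     |y (x + d) - y x| <= C d + 2 M (exp (-k x) + exp (-k (1 - d - x))),
   and at distance lambda - h from the boundary the layer terms are O(N^-2).  Hence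
   y_(q-1) - y_q = O(ln N / N), which the factor 1 / T1 turns into O(1/N), y_(q+1) - y_q = O(1/N),
   and f (x, y x) = eps^2 y''(x) is O(1/N) near lambda because it is a second difference of y with
   step eps <= C0 / N.  Below a fixed threshold for N all terms are merely bounded, which is O(1/N)
   as well. *)

(** * Calculus on the real line *)

Lemma is_derive_continuity_pt (f : R -> R) x l : is_derive f x l -> continuity_pt f x.
Proof.
  intros Hf. apply continuity_pt_filterlim, (ex_derive_continuous f). now exists l.
Qed.

Lemma continuity_pt_shift (f : R -> R) d x :
  continuity_pt f (x + d) -> continuity_pt (fun t => f (t + d)) x.
Proof.
  intros Hf. apply (continuity_pt_comp (fun t => t + d) f x); [|exact Hf].
  apply (is_derive_continuity_pt _ _ 1). auto_derive; auto; ring.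
Qed.

Lemma is_derive_shift (f : R -> R) d x l :
  is_derive f (x + d) l -> is_derive (fun t => f (t + d)) x l.
Proof.
  intros Hf. replace l with (1 * l) by ring.
  apply (is_derive_comp f (fun t => t + d)); [exact Hf|]. auto_derive; auto; ring.
Qed.

Lemma is_derive_increment (Y Y1 : R -> R) d x :
  is_derive Y (x + d) (Y1 (x + d)) -> is_derive Y x (Y1 x) ->
  is_derive (fun t => Y (t + d) - Y t) x (Y1 (x + d) - Y1 x).
Proof.
  intros H1 H2.
  apply (is_derive_minus (fun t => Y (t + d)) Y); [apply is_derive_shift|]; assumption.
Qed.

Lemma MVT_open (f df : R -> R) a b : a < b ->
  (forall x, a < x < b -> is_derive f x (df x)) ->
  (forall x, a <= x <= b -> continuity_pt f x) ->
  exists c, a < c < b /\ f b - f a = df c * (b - a).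
Proof.
  intros Hab Hd Hc.
  assert (pr : forall c, a < c < b -> derivable_pt f c).
  { intros c Hc'. exists (df c). apply is_derive_Reals, Hd, Hc'. }
  destruct (MVT f id a b pr (fun c _ => derivable_pt_id c) Hab Hc) as [c [Hcab Heq]].
  { intros c _. apply derivable_continuous_pt, derivable_pt_id. }
  exists c; split; [exact Hcab|].
  rewrite (derive_pt_eq_0 f c (df c) (pr c Hcab)) in Heq by apply is_derive_Reals, Hd, Hcab.
  rewrite (derive_pt_eq_0 id c 1 (derivable_pt_id c)) in Heq by apply derivable_pt_lim_id.
  unfold id in Heq. lra.
Qed.

Lemma local_max_second_derive_nonpos (Z Z1 : R -> R) z2 a b c : a < c < b ->
  (forall x, a < x < b -> is_derive Z x (Z1 x)) -> is_derive Z1 c z2 ->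
  (forall x, a < x < b -> Z x <= Z c) -> z2 <= 0.
Proof.
  intros Hc HZ HZ1 Hmax.
  assert (Hcrit : Z1 c = 0).
  { assert (pr : derivable_pt Z c) by (exists (Z1 c); apply is_derive_Reals, HZ, Hc).
    rewrite <- (derive_pt_eq_0 Z c (Z1 c) pr) by apply is_derive_Reals, HZ, Hc.
    apply (deriv_maximum Z a b c pr); try lra. intros x Hx1 Hx2; apply Hmax; lra. }
  apply Rnot_lt_le; intros Hpos.
  apply is_derive_Reals in HZ1.
  destruct (HZ1 (z2 / 2) ltac:(lra)) as [del Hdel].
  assert (Hright : forall h, 0 < h < del -> 0 < Z1 (c + h)).
  { intros h Hh.
    specialize (Hdel h ltac:(lra) ltac:(rewrite Rabs_right; lra)).
    rewrite Hcrit, Rminus_0_r in Hdel. apply Rabs_def2 in Hdel.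
    assert (Hq : 0 < Z1 (c + h) / h) by lra.
    replace (Z1 (c + h)) with (Z1 (c + h) / h * h) by (field; lra). nra. }
  set (t := Rmin (del / 2) ((b - c) / 2)).
  assert (Ht : 0 < t <= del / 2 /\ t <= (b - c) / 2).
  { pose proof (cond_pos del). unfold t.
    split; [split; [apply Rmin_glb_lt; lra | apply Rmin_l] | apply Rmin_r]. }
  destruct (MVT_cor2 Z Z1 c (c + t)) as [xi [Heq Hxi]]; [lra| |].
  { intros x Hx. apply is_derive_Reals, HZ; lra. }
  specialize (Hright (xi - c) ltac:(lra)). replace (c + (xi - c)) with xi in Hright by ring.
  assert (Z (c + t) <= Z c) by (apply Hmax; lra).
  nra.
Qed.

Lemma max_principle (z z1 z2 : R -> R) a b : a < b ->
  (forall x, a <= x <= b -> continuity_pt z x) ->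
  (forall x, a < x < b -> is_derive z x (z1 x) /\ is_derive z1 x (z2 x)) ->
  z a <= 0 -> z b <= 0 ->
  (forall x, a < x < b -> 0 < z x -> 0 < z2 x) ->
  forall x, a <= x <= b -> z x <= 0.
Proof.
  intros Hab Hc Hd Ha Hb Hconvex.
  destruct (continuity_ab_maj z a b ltac:(lra) Hc) as [c [Hmax Hcab]].
  intros x Hx. apply Rle_trans with (z c); [apply Hmax, Hx|].
  apply Rnot_lt_le; intros Hzc.
  assert (Hci : a < c < b).
  { destruct Hcab as [[Hac|Hac] [Hcb|Hcb]]; subst; split; lra. }
  assert (z2 c <= 0).
  { apply (local_max_second_derive_nonpos z z1 (z2 c) a b c Hci).
    - intros t Ht. apply Hd, Ht.
    - apply Hd, Hci.
    - intros t Ht. apply Hmax. lra. }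
  specialize (Hconvex c Hci Hzc). lra.
Qed.

Lemma MVT_increment_between (g dg : R -> R) lo hi :
  (forall v, is_derive g v (dg v)) -> (forall v, lo <= dg v <= hi) ->
  forall u v, v <= u -> lo * (u - v) <= g u - g v <= hi * (u - v).
Proof.
  intros Hd Hb u v Huv.
  destruct (MVT_gen g v u dg) as [c [_ Heq]].
  { intros t _. apply Hd. }
  { intros t _. apply (is_derive_continuity_pt _ _ (dg t)), Hd. }
  rewrite Heq. specialize (Hb c). split; apply Rmult_le_compat_r; lra.
Qed.

Lemma increment_between_abs_le (g : R -> R) lo hi : 0 <= lo ->
  (forall u v, v <= u -> lo * (u - v) <= g u - g v <= hi * (u - v)) ->
  forall u v, Rabs (g u - g v) <= hi * Rabs (u - v).
Proof.
  intros Hlo Hg u v. destruct (Rle_or_lt v u) as [Huv|Huv].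
  - destruct (Hg u v Huv). rewrite !Rabs_pos_eq by nra. lra.
  - destruct (Hg v u ltac:(lra)). rewrite !Rabs_left1 by nra. lra.
Qed.

Lemma MVT_lipschitz (g dg : R -> R) a b K :
  (forall t, a < t < b -> is_derive g t (dg t)) -> (forall t, a < t < b -> Rabs (dg t) <= K) ->
  forall s t, a < s < b -> a < t < b -> Rabs (g s - g t) <= K * Rabs (s - t).
Proof.
  intros Hd Hb.
  assert (Hlt : forall s t, a < s < b -> a < t < b -> t < s ->
                Rabs (g s - g t) <= K * Rabs (s - t)).
  { intros s t Hs Ht Hts.
    destruct (MVT_open g dg t s Hts) as [c [Hc Heq]].
    - intros x Hx. apply Hd. lra.
    - intros x Hx. apply (is_derive_continuity_pt _ _ (dg x)), Hd. lra.
    - rewrite Heq, Rabs_mult. apply Rmult_le_compat_r; [apply Rabs_pos | apply Hb; lra]. }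
  intros s t Hs Ht. destruct (Rtotal_order s t) as [Hst|[<-|Hst]].
  - rewrite Rabs_minus_sym, (Rabs_minus_sym s). auto.
  - rewrite !Rminus_diag, Rabs_R0, Rmult_0_r. lra.
  - auto.
Qed.

(** * Functions continuous on the strip *)

Lemma cont_on_strip_locally (g : R -> R -> R) u v : cont_on_strip g -> 0 <= u <= 1 ->
  exists d : posreal, forall x w, 0 <= x <= 1 -> Rabs (x - u) < d -> Rabs (w - v) < d ->
    Rabs (g x w - g u v) < 1.
Proof.
  intros Hg Hu. specialize (Hg u v Hu).
  apply filterlim_locally with (eps := mkposreal 1 Rlt_0_1) in Hg.
  destruct Hg as [d Hd]. exists d. intros x w Hx Hxu Hwv.
  apply (Hd (x, w)); [split; assumption | exact Hx].
Qed.

Lemma cont_on_strip_unif_oscillation (g : R -> R -> R) M : cont_on_strip g ->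
  exists d : posreal, forall x w x' w', 0 <= x <= 1 -> -M <= w <= M ->
    0 <= x' <= 1 -> -M <= w' <= M -> Rabs (x - x') < d -> Rabs (w - w') < d ->
    Rabs (g x w - g x' w') <= 2.
Proof.
  intros Hg.
  assert (Hloc : forall p : R * R, exists d : posreal, 0 <= fst p <= 1 ->
    forall x w, 0 <= x <= 1 -> Rabs (x - fst p) < d -> Rabs (w - snd p) < d ->
    Rabs (g x w - g (fst p) (snd p)) < 1).
  { intros [u v]; simpl. destruct (Rle_dec 0 u), (Rle_dec u 1).
    2-4: exists (mkposreal 1 Rlt_0_1); intros; lra.
    destruct (cont_on_strip_locally g u v Hg ltac:(lra)) as [d Hd]. exists d; auto. }
  destruct (choice _ Hloc) as [D HD].
  (* A Lebesgue number for the cover of the rectangle by the balls of radius [D (u, v) / 2]. *)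
  pose (delta u v := mkposreal (D (u, v) / 2) ltac:(pose proof (cond_pos (D (u, v))); lra)).
  destruct (compactness_value_2d 0 1 (-M) M delta) as [d Hd].
  exists d. intros x w x' w' Hx Hw Hx' Hw' Hxx Hww.
  apply NNPP; intros Hn. apply (Hd x w Hx Hw). intros [u [v [Hu [Hv [Hxu [Hwv Hdd]]]]]].
  apply Hn. simpl in Hxu, Hwv, Hdd. pose proof (cond_pos (D (u, v))).
  assert (Hg1 : Rabs (g x w - g u v) < 1) by (apply (HD (u, v)); simpl; lra).
  assert (Hg2 : Rabs (g x' w' - g u v) < 1).
  { apply (HD (u, v)); simpl; [lra|lra| |].
    - replace (x' - u) with ((x' - x) + (x - u)) by ring.
      eapply Rle_lt_trans; [apply Rabs_triang|]. rewrite Rabs_minus_sym in Hxx. lra.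
    - replace (w' - v) with ((w' - w) + (w - v)) by ring.
      eapply Rle_lt_trans; [apply Rabs_triang|]. rewrite Rabs_minus_sym in Hww. lra. }
  apply Rabs_def2 in Hg1, Hg2. apply Rabs_le. lra.
Qed.

Lemma chain_abs_le (phi : R -> R) (k : nat) B :
  (forall j, (j < k)%nat -> Rabs (phi (INR (S j) / INR k) - phi (INR j / INR k)) <= B) ->
  forall j, (j <= k)%nat -> Rabs (phi (INR j / INR k) - phi 0) <= INR j * B.
Proof.
  intros Hstep. induction j as [|j IH]; intros Hj.
  - rewrite Rdiv_0_l, Rminus_diag, Rabs_R0. simpl. lra.
  - replace (phi (INR (S j) / INR k) - phi 0) with
      ((phi (INR (S j) / INR k) - phi (INR j / INR k)) + (phi (INR j / INR k) - phi 0)) by ring.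
    eapply Rle_trans; [apply Rabs_triang|].
    specialize (Hstep j ltac:(lia)). specialize (IH ltac:(lia)).
    replace (INR (S j) * B) with (B + INR j * B) by (rewrite S_INR; ring). lra.
Qed.

Lemma cont_on_strip_bounded (g : R -> R -> R) M : cont_on_strip g -> 0 <= M ->
  exists K, 0 <= K /\ forall x w, 0 <= x <= 1 -> -M <= w <= M -> Rabs (g x w) <= K.
Proof.
  intros Hg HM.
  destruct (cont_on_strip_unif_oscillation g M Hg) as [d Hd].
  pose proof (cond_pos d) as Hd0.
  destruct (INR_unbounded ((1 + 2 * M) / d)) as [k Hk].
  assert (Hk0 : 0 < INR k) by (enough (0 <= (1 + 2 * M) / d) by lra; apply Rdiv_le_0_compat; lra).
  assert (Hstep : / INR k * (1 + 2 * M) < d).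
  { assert (1 + 2 * M < INR k * d).
    { replace (1 + 2 * M) with ((1 + 2 * M) / d * d) by (field; lra).
      apply Rmult_lt_compat_r; lra. }
    apply (Rmult_lt_reg_l (INR k)); [lra|].
    replace (INR k * (/ INR k * (1 + 2 * M))) with (1 + 2 * M) by (field; lra). lra. }
  exists (Rabs (g 0 (-M)) + INR k * 2).
  split; [pose proof (Rabs_pos (g 0 (-M))); lra|]. intros x w Hx Hw.
  (* Walk from (0, -M) to (x, w) in k steps, each shorter than d. *)
  set (phi t := g (x * t) (-M + (w + M) * t)).
  assert (Hin : forall j, (j <= k)%nat -> 0 <= INR j / INR k <= 1).
  { intros j Hj. assert (INR j <= INR k) by (apply le_INR; lia).
    pose proof (pos_INR j). split; [apply Rdiv_le_0_compat; lra|].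
    apply (Rdiv_le_1 (INR j) (INR k)); lra. }
  assert (Hsteps : forall j, (j < k)%nat ->
    Rabs (phi (INR (S j) / INR k) - phi (INR j / INR k)) <= 2).
  { intros j Hj. pose proof (Hin j ltac:(lia)). pose proof (Hin (S j) ltac:(lia)).
    assert (Hdt : INR (S j) / INR k - INR j / INR k = / INR k).
    { rewrite S_INR. field. lra. }
    pose proof (Rinv_0_lt_compat _ Hk0).
    apply Hd; try nra.
    + rewrite <- Rmult_minus_distr_l, Hdt, Rabs_mult, Rabs_pos_eq, Rabs_pos_eq by lra. nra.
    + replace (-M + (w + M) * (INR (S j) / INR k) - (-M + (w + M) * (INR j / INR k)))
        with ((w + M) * (INR (S j) / INR k - INR j / INR k)) by ring.
      rewrite Hdt, Rabs_mult, Rabs_pos_eq, Rabs_pos_eq by lra. nra. }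
  pose proof (chain_abs_le phi k 2 Hsteps k (Nat.le_refl k)) as Hchain.
  unfold Rdiv in Hchain. rewrite Rinv_r in Hchain by lra. unfold phi in Hchain.
  rewrite Rmult_1_r, Rmult_0_r, Rmult_1_r, Rmult_0_r, Rplus_0_r in Hchain.
  replace (-M + (w + M)) with w in Hchain by ring.
  replace (g x w) with ((g x w - g 0 (-M)) + g 0 (-M)) by ring.
  eapply Rle_trans; [apply Rabs_triang|]. lra.
Qed.

(** * The boundary value problem *)

Definition reaction_diffusion_sol (eps m : R) (G : R -> R -> R) (Y Y1 Y2 : R -> R) : Prop :=
  (forall x, 0 <= x <= 1 -> continuity_pt Y x) /\
  (forall x, 0 < x < 1 ->
     is_derive Y x (Y1 x) /\ is_derive Y1 x (Y2 x) /\ eps ^ 2 * Y2 x = G x (Y x)) /\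
  (forall x u v, 0 <= x <= 1 -> v <= u -> m * (u - v) <= G x u - G x v).

Lemma reaction_diffusion_sol_opp eps m G Y Y1 Y2 :
  reaction_diffusion_sol eps m G Y Y1 Y2 ->
  reaction_diffusion_sol eps m (fun x v => - G x (- v))
    (fun x => - Y x) (fun x => - Y1 x) (fun x => - Y2 x).
Proof.
  intros [Hc [Hd Hmono]]. split; [|split].
  - intros x Hx. apply continuity_pt_opp, Hc, Hx.
  - intros x Hx. destruct (Hd x Hx) as [HY1 [HY2 Heq]].
    split; [|split]; [apply (is_derive_opp Y)|apply (is_derive_opp Y1)|]; auto.
    rewrite Ropp_involutive, <- Heq. ring.
  - intros x u v Hx Huv. specialize (Hmono x (- v) (- u) Hx ltac:(lra)). lra.
Qed.

Section ReactionDiffusion.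

Variables (eps m : R) (G : R -> R -> R) (Y Y1 Y2 : R -> R).
Hypothesis HY : reaction_diffusion_sol eps m G Y Y1 Y2.
Hypothesis m_pos : 0 < m.
Hypothesis eps_pos : 0 < eps.

Lemma reaction_diffusion_sol_le Mf : Y 0 = 0 -> Y 1 = 0 -> 0 <= Mf ->
  (forall x, 0 < x < 1 -> - Mf <= G x 0) -> forall x, 0 <= x <= 1 -> Y x <= Mf / m.
Proof.
  destruct HY as [Hc [Hd Hmono]]. intros HY0 HY1 HMf HG.
  assert (0 <= Mf / m) by (apply Rdiv_le_0_compat; lra).
  intros x Hx.
  enough (Y x - Mf / m <= 0) by lra.
  apply (max_principle (fun x => Y x - Mf / m) Y1 Y2 0 1); try lra.
  - intros t Ht. apply continuity_pt_minus; [apply Hc, Ht|].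
    apply continuity_pt_const. intros ? ?; reflexivity.
  - intros t Ht. destruct (Hd t Ht) as [HYd [HY1d _]]. split; [|exact HY1d].
    replace (Y1 t) with (Y1 t - 0) by ring.
    apply (is_derive_minus Y (fun _ => Mf / m)); [exact HYd|exact (is_derive_const (Mf / m) t)].
  - intros t Ht Hpos. destruct (Hd t Ht) as [_ [_ Heq]].
    specialize (Hmono t (Y t) 0 ltac:(lra) ltac:(lra)). specialize (HG t Ht).
    assert (Mf < m * Y t).
    { replace Mf with (m * (Mf / m)) by (field; lra). apply Rmult_lt_compat_l; lra. }
    assert (0 < eps ^ 2) by (apply pow_lt; lra).
    nra.
Qed.

Lemma reaction_diffusion_sol_increment_second_derive M0 Kx d t P :
  (forall x, 0 <= x <= 1 -> Rabs (Y x) <= M0) -> 0 <= Kx ->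
  (forall x1 x2 v, 0 < x1 < 1 -> 0 < x2 < 1 -> Rabs v <= M0 ->
     Rabs (G x1 v - G x2 v) <= Kx * Rabs (x1 - x2)) ->
  0 < d -> 0 < t -> t + d < 1 -> 0 <= P -> d * (Kx / m) + P < Y (t + d) - Y t ->
  m * P < eps ^ 2 * (Y2 (t + d) - Y2 t).
Proof.
  destruct HY as [_ [Hd Hmono]]. intros HM0 HKx HL Hd0 Ht0 Htd HP Hgt.
  destruct (Hd (t + d) ltac:(lra)) as [_ [_ Ha]]. destruct (Hd t ltac:(lra)) as [_ [_ Hb]].
  assert (Hx : - (Kx * d) <= G (t + d) (Y (t + d)) - G t (Y (t + d))).
  { pose proof (HL (t + d) t (Y (t + d)) ltac:(lra) ltac:(lra) ltac:(apply HM0; lra)) as HLt.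
    replace (t + d - t) with d in HLt by ring. rewrite (Rabs_pos_eq d) in HLt by lra.
    apply Rabs_le_between in HLt. lra. }
  assert (0 <= d * (Kx / m)) by (apply Rmult_le_pos; [lra | apply Rdiv_le_0_compat; lra]).
  pose proof (Hmono t (Y (t + d)) (Y t) ltac:(lra) ltac:(lra)) as Hv.
  assert (Hgrow : m * (d * (Kx / m) + P) < m * (Y (t + d) - Y t))
    by (apply Rmult_lt_compat_l; lra).
  replace (m * (d * (Kx / m) + P)) with (Kx * d + m * P) in Hgrow by (field; lra).
  rewrite Rmult_minus_distr_l, Ha, Hb. lra.
Qed.

Lemma reaction_diffusion_sol_increment_le M0 Kx :
  (forall x, 0 <= x <= 1 -> Rabs (Y x) <= M0) -> 0 <= Kx ->
  (forall x1 x2 v, 0 < x1 < 1 -> 0 < x2 < 1 -> Rabs v <= M0 ->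
     Rabs (G x1 v - G x2 v) <= Kx * Rabs (x1 - x2)) ->
  forall d x, 0 < d < 1 -> 0 <= x <= 1 - d ->
  Y (x + d) - Y x <= d * (Kx / m)
    + 2 * M0 * (exp (- (sqrt m / eps) * x) + exp (- (sqrt m / eps) * (1 - d - x))).
Proof.
  pose proof HY as [Hc [Hd _]]. intros HM0 HKx HL d x Hdd Hx.
  set (k := sqrt m / eps).
  assert (Hk2 : eps ^ 2 * (k * k) = m).
  { unfold k. replace (eps ^ 2 * (sqrt m / eps * (sqrt m / eps))) with (sqrt m * sqrt m)
      by (field; lra). apply sqrt_sqrt; lra. }
  assert (HM0p : 0 <= M0) by (specialize (HM0 0 ltac:(lra)); pose proof (Rabs_pos (Y 0)); lra).
  assert (HC1 : 0 <= d * (Kx / m)) by (apply Rmult_le_pos; [lra|apply Rdiv_le_0_compat; lra]).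
  (* Comparison function: the barrier [B] is at least [2 M0] at both ends of [0, 1 - d]
     and satisfies [eps^2 B'' = m (B - d Kx / m)]. *)
  set (E t := exp (- k * t) + exp (- k * (1 - d - t))).
  set (B t := d * (Kx / m) + 2 * M0 * E t).
  set (B1 t := 2 * M0 * (- k * exp (- k * t) + k * exp (- k * (1 - d - t)))).
  set (B2 t := 2 * M0 * (k * k) * E t).
  assert (HE : forall t, 0 < exp (- k * t) /\ 0 < exp (- k * (1 - d - t)))
    by (split; apply exp_pos).
  assert (HB : forall t, is_derive B t (B1 t) /\ is_derive B1 t (B2 t)).
  { intros t. unfold B, B1, B2, E. split; auto_derive; auto; unfold Rminus; ring. }
  assert (HYabs : forall t, 0 <= t <= 1 -> - M0 <= Y t <= M0)
    by (intros; apply Rabs_le_between; auto).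
  enough (Y (x + d) - Y x - B x <= 0) by (unfold B, E in *; lra).
  apply (max_principle (fun t => Y (t + d) - Y t - B t) (fun t => Y1 (t + d) - Y1 t - B1 t)
           (fun t => Y2 (t + d) - Y2 t - B2 t) 0 (1 - d)); [lra| | | | | | lra].
  - intros t Ht. apply continuity_pt_minus; [apply continuity_pt_minus|].
    + apply continuity_pt_shift, Hc. lra.
    + apply Hc. lra.
    + apply (is_derive_continuity_pt _ _ _ (proj1 (HB t))).
  - intros t Ht. destruct (Hd (t + d) ltac:(lra)) as [HYa [HY1a _]].
    destruct (Hd t ltac:(lra)) as [HYb [HY1b _]].
    split; apply (is_derive_minus (fun t => _ (t + d) - _ t) _);
      [apply is_derive_increment| apply HB | apply is_derive_increment | apply HB]; assumption.
  - pose proof (HYabs (0 + d) ltac:(lra)). pose proof (HYabs 0 ltac:(lra)).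
    pose proof (HE 0). unfold B, E. rewrite Rmult_0_r, exp_0. nra.
  - pose proof (HYabs (1 - d + d) ltac:(lra)). pose proof (HYabs (1 - d) ltac:(lra)).
    pose proof (HE (1 - d)). unfold B, E. replace (- k * (1 - d - (1 - d))) with 0 by ring.
    rewrite exp_0. nra.
  - intros t Ht Hpos. pose proof (HE t).
    assert (HP : 0 <= 2 * M0 * E t) by (unfold E; nra).
    pose proof (reaction_diffusion_sol_increment_second_derive M0 Kx d t (2 * M0 * E t)
                  HM0 HKx HL ltac:(lra) ltac:(lra) ltac:(lra) HP ltac:(unfold B in Hpos; lra)).
    assert (HB2 : eps ^ 2 * B2 t = m * (2 * M0 * E t)) by (unfold B2; rewrite <- Hk2; ring).
    apply (Rmult_lt_reg_l (eps ^ 2)); [apply pow_lt; lra|]. lra.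
Qed.

Lemma reaction_diffusion_sol_second_difference s x : 0 < s -> 0 <= x -> x + 2 * s <= 1 ->
  exists z, x < z < x + 2 * s /\ Y (x + 2 * s) - 2 * Y (x + s) + Y x = s ^ 2 * Y2 z.
Proof.
  destruct HY as [Hc [Hd _]]. intros Hs Hx Hx2.
  destruct (MVT_open (fun t => Y (t + s) - Y t) (fun t => Y1 (t + s) - Y1 t) x (x + s))
    as [eta [Heta Heq]]; [lra| | |].
  { intros t Ht. apply is_derive_increment; apply Hd; lra. }
  { intros t Ht. apply continuity_pt_minus; [apply continuity_pt_shift|]; apply Hc; lra. }
  destruct (MVT_open Y1 Y2 eta (eta + s)) as [z [Hz Heq2]]; [lra| | |].
  { intros t Ht. apply Hd; lra. }
  { intros t Ht. apply (is_derive_continuity_pt _ _ (Y2 t)). apply Hd; lra. }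
  exists z. split; [lra|].
  replace (x + 2 * s) with (x + s + s) by ring.
  replace (x + s - x) with s in Heq by ring. replace (eta + s - eta) with s in Heq2 by ring.
  rewrite Heq2 in Heq. lra.
Qed.

End ReactionDiffusion.

Lemma locally_in_unit_interval x : 0 < x < 1 -> locally x (fun t => 0 < t < 1).
Proof.
  intros Hx. assert (Hp : 0 < Rmin x (1 - x)) by (apply Rmin_glb_lt; lra).
  exists (mkposreal _ Hp). intros t Ht. change (Rabs (t - x) < Rmin x (1 - x)) in Ht.
  pose proof (Rmin_l x (1 - x)). pose proof (Rmin_r x (1 - x)).
  apply Rabs_def2 in Ht. lra.
Qed.

(* [is_solution] controls [y] at 0 and 1 only through one-sided limits; [C0_extension_lt]
   replaces [y] by a function continuous on all of R that agrees with it on [0, 1]. *)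
Lemma is_solution_extension eps m f y : is_solution eps f y ->
  (forall x u v, 0 <= x <= 1 -> v <= u -> m * (u - v) <= f x u - f x v) ->
  exists Y Y1 Y2, (forall x, 0 <= x <= 1 -> Y x = y x) /\ reaction_diffusion_sol eps m f Y Y1 Y2.
Proof.
  intros [Hy0 [Hy1 [Hl0 [Hl1 [y1 [y2 Hd]]]]]] Hmono.
  assert (Hcont : forall c, 0 < c < 1 -> filterlim y (locally c) (locally (y c))).
  { intros c Hc. apply (ex_derive_continuous y). exists (y1 c). apply Hd, Hc. }
  destruct (C0_extension_lt y 0 0 0 1 Rlt_0_1 Hcont Hl0 Hl1) as [Y [HYc [HYy [HY0 HY1]]]].
  assert (HYeq : forall x, 0 <= x <= 1 -> Y x = y x).
  { intros x [[H0|H0] [H1|H1]]; subst; auto; try congruence; lra. }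
  exists Y, y1, y2. split; [exact HYeq|]. split; [|split].
  - intros x _. apply continuity_pt_filterlim, HYc.
  - intros x Hx. destruct (Hd x Hx) as [Hy1d [Hy2d Heq]].
    assert (Hloc : locally x (fun t => y t = Y t)).
    { apply (filter_imp (fun t => 0 < t < 1)); [|apply locally_in_unit_interval, Hx].
      intros t Ht. symmetry. apply HYy, Ht. }
    split; [|split]; [apply (is_derive_ext_loc y); auto | exact Hy2d | rewrite HYy; auto].
  - exact Hmono.
Qed.

Section Solution.

Variables (f : R -> R -> R) (m Mf Kx eps : R) (y : R -> R).
Hypothesis m_pos : 0 < m.
Hypothesis eps_pos : 0 < eps.
Hypothesis f_mono : forall x u v, 0 <= x <= 1 -> v <= u -> m * (u - v) <= f x u - f x v.
Hypothesis f_bound0 : forall x, 0 <= x <= 1 -> Rabs (f x 0) <= Mf.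
Hypothesis Kx_nonneg : 0 <= Kx.
Hypothesis f_lipx : forall x1 x2 v, 0 < x1 < 1 -> 0 < x2 < 1 -> Rabs v <= Mf / m ->
  Rabs (f x1 v - f x2 v) <= Kx * Rabs (x1 - x2).
Hypothesis y_sol : is_solution eps f y.

Lemma solution_abs_le x : 0 <= x <= 1 -> Rabs (y x) <= Mf / m.
Proof.
  intros Hx.
  destruct (is_solution_extension eps m f y y_sol f_mono) as [Y [Y1 [Y2 [HYy HY]]]].
  rewrite <- (HYy x Hx). destruct y_sol as [Hy0 [Hy1 _]].
  assert (HMf : 0 <= Mf)
    by (specialize (f_bound0 0 ltac:(lra)); pose proof (Rabs_pos (f 0 0)); lra).
  assert (Hf0 : forall t, 0 < t < 1 -> - Mf <= f t 0 <= Mf).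
  { intros t Ht. apply Rabs_le_between, f_bound0. lra. }
  apply Rabs_le_between. split.
  - enough (- Y x <= Mf / m) by lra.
    apply (reaction_diffusion_sol_le eps m _ _ _ _ (reaction_diffusion_sol_opp _ _ _ _ _ _ HY));
      auto; cbv beta.
    + rewrite HYy, Hy0 by lra. ring.
    + rewrite HYy, Hy1 by lra. ring.
    + intros t Ht. rewrite Ropp_0. specialize (Hf0 t Ht). lra.
  - apply (reaction_diffusion_sol_le eps m f Y Y1 Y2 HY m_pos eps_pos Mf); auto.
    + rewrite HYy, Hy0 by lra. reflexivity.
    + rewrite HYy, Hy1 by lra. reflexivity.
    + intros t Ht. apply Hf0, Ht.
Qed.

Lemma solution_increment_abs_le d x : 0 < d < 1 -> 0 <= x <= 1 - d ->
  Rabs (y (x + d) - y x) <= d * (Kx / m)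
    + 2 * (Mf / m) * (exp (- (sqrt m / eps) * x) + exp (- (sqrt m / eps) * (1 - d - x))).
Proof.
  intros Hd Hx.
  destruct (is_solution_extension eps m f y y_sol f_mono) as [Y [Y1 [Y2 [HYy HY]]]].
  rewrite <- (HYy x), <- (HYy (x + d)) by lra.
  assert (HYb : forall t, 0 <= t <= 1 -> Rabs (Y t) <= Mf / m).
  { intros t Ht. rewrite HYy by exact Ht. apply solution_abs_le, Ht. }
  apply Rabs_le_between. split.
  - enough (- Y (x + d) - - Y x <= d * (Kx / m)
      + 2 * (Mf / m) * (exp (- (sqrt m / eps) * x) + exp (- (sqrt m / eps) * (1 - d - x))))
      by lra.
    apply (reaction_diffusion_sol_increment_le eps m _ _ _ _
             (reaction_diffusion_sol_opp _ _ _ _ _ _ HY)); auto; cbv beta.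
    + intros t Ht. rewrite Rabs_Ropp. apply HYb, Ht.
    + intros x1 x2 v Hx1 Hx2 Hv.
      replace (- f x1 (- v) - - f x2 (- v)) with (- (f x1 (- v) - f x2 (- v))) by ring.
      rewrite Rabs_Ropp. apply f_lipx; auto. rewrite Rabs_Ropp. exact Hv.
  - apply (reaction_diffusion_sol_increment_le eps m f Y Y1 Y2); auto.
Qed.

Lemma solution_second_difference s x : 0 < s -> 0 <= x -> x + 2 * s <= 1 ->
  exists z, x < z < x + 2 * s /\
    eps ^ 2 * (y (x + 2 * s) - 2 * y (x + s) + y x) = s ^ 2 * f z (y z).
Proof.
  intros Hs Hx Hx2.
  destruct (is_solution_extension eps m f y y_sol f_mono) as [Y [Y1 [Y2 [HYy HY]]]].
  destruct (reaction_diffusion_sol_second_difference eps m f Y Y1 Y2 HY s x Hs Hx Hx2)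
    as [z [Hz Heq]].
  exists z. split; [exact Hz|].
  destruct HY as [_ [Hd _]]. destruct (Hd z ltac:(lra)) as [_ [_ Hode]].
  rewrite <- !HYy by lra. rewrite Heq, <- Hode. ring.
Qed.

End Solution.

(** * The scheme at the transition point *)

(* [tanh_half s] is [tanh (s / 2)]. *)
Definition tanh_half (s : R) : R := (exp s - 1) / (exp s + 1).

Lemma tanh_half_pos s : 0 < s -> 0 < tanh_half s.
Proof.
  intros Hs. pose proof (exp_ineq1 s ltac:(lra)). apply Rdiv_lt_0_compat; lra.
Qed.

Lemma inv_tanh_half_le s : 0 < s -> / tanh_half s <= 1 + 2 / s.
Proof.
  intros Hs. pose proof (exp_ineq1 s ltac:(lra)). unfold tanh_half. rewrite Rinv_div.
  replace ((exp s + 1) / (exp s - 1)) with (1 + 2 / (exp s - 1)) by (field; lra).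
  apply Rplus_le_compat_l, Rmult_le_compat_l; [lra|]. apply Rinv_le_contravar; lra.
Qed.

Lemma tanh_half_ge a s : 0 < a <= s -> a / (2 + a) <= tanh_half s.
Proof.
  intros Has. pose proof (exp_ineq1 s ltac:(lra)). unfold tanh_half.
  replace (a / (2 + a)) with (1 - 2 / (2 + a)) by (field; lra).
  replace ((exp s - 1) / (exp s + 1)) with (1 - 2 / (exp s + 1)) by (field; lra).
  apply Rplus_le_compat_l, Ropp_le_contravar, Rmult_le_compat_l; [lra|].
  apply Rinv_le_contravar; lra.
Qed.

Lemma csch_add_coth b s : 0 < s -> b / sinh s + b / tanh s = b / tanh_half s.
Proof.
  intros Hs. pose proof (exp_ineq1 s ltac:(lra)). pose proof (exp_pos s).
  unfold tanh_half, tanh, sinh, cosh. rewrite exp_Ropp.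
  field; repeat split; try lra; intro Hz; field_simplify in Hz; nra.
Qed.

Lemma coth_sub_csch b s : 0 < s -> b / tanh s - b / sinh s = b * tanh_half s.
Proof.
  intros Hs. pose proof (exp_ineq1 s ltac:(lra)). pose proof (exp_pos s).
  unfold tanh_half, tanh, sinh, cosh. rewrite exp_Ropp.
  field; repeat split; try lra; intro Hz; field_simplify in Hz; nra.
Qed.

Lemma F_op_interior gamma eps f xm N v i : 0 < gamma -> 0 < eps -> (0 < i < N)%nat ->
  xm (i - 1)%nat < xm i < xm (i + 1)%nat ->
  let T1 := tanh_half (sqrt gamma / eps * (xm i - xm (i - 1)%nat)) in
  let T2 := tanh_half (sqrt gamma / eps * (xm (i + 1)%nat - xm i)) in
  F_op gamma eps f xm N v i =
    gamma * (v (i - 1)%nat - v i) / (2 * T1 * (T1 + T2))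
    + gamma * (v (i + 1)%nat - v i) / (2 * T2 * (T1 + T2))
    - (T1 * f ((xm (i - 1)%nat + xm i) / 2) ((v (i - 1)%nat + v i) / 2)
       + T2 * f ((xm i + xm (i + 1)%nat) / 2) ((v i + v (i + 1)%nat) / 2)) / (T1 + T2).
Proof.
  intros Hg He Hi Hx T1 T2.
  assert (Hb : 0 < sqrt gamma / eps) by (apply Rdiv_lt_0_compat; [apply sqrt_lt_R0|]; lra).
  assert (Hs1 : 0 < sqrt gamma / eps * (xm i - xm (i - 1)%nat)) by (apply Rmult_lt_0_compat; lra).
  assert (Hs2 : 0 < sqrt gamma / eps * (xm (i + 1)%nat - xm i)) by (apply Rmult_lt_0_compat; lra).
  assert (HT1 : 0 < T1) by apply tanh_half_pos, Hs1.
  assert (HT2 : 0 < T2) by apply tanh_half_pos, Hs2.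
  unfold F_op. cbv beta zeta.
  replace (i =? 0)%nat with false by (symmetry; apply Nat.eqb_neq; lia).
  replace (i =? N)%nat with false by (symmetry; apply Nat.eqb_neq; lia).
  replace (i + 1 - 1)%nat with i by lia.
  rewrite !csch_add_coth, !coth_sub_csch by assumption.
  fold T1 T2. set (b := sqrt gamma / eps) in *.
  field. repeat split; apply Rgt_not_eq; nra.
Qed.

Lemma tanh_form_abs_le g T1 T2 tau DL DR F1 F2 Fm : 0 < g -> 0 < T1 -> 0 < tau <= T2 ->
  Rabs F1 <= Fm -> Rabs F2 <= Fm ->
  Rabs (g * DL / (2 * T1 * (T1 + T2)) + g * DR / (2 * T2 * (T1 + T2))
        - (T1 * F1 + T2 * F2) / (T1 + T2))
  <= g / (2 * tau) * / T1 * Rabs DL + g / (2 * tau * tau) * Rabs DR + Fm.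
Proof.
  intros Hg HT1 [Htau HT2] HF1 HF2.
  assert (Hc1 : g / (2 * T1 * (T1 + T2)) <= g / (2 * tau) * / T1).
  { replace (g / (2 * tau) * / T1) with (g / (2 * T1 * tau)) by (field; lra).
    apply Rmult_le_compat_l; [lra|]. apply Rinv_le_contravar; nra. }
  assert (Hc2 : g / (2 * T2 * (T1 + T2)) <= g / (2 * tau * tau)).
  { apply Rmult_le_compat_l; [lra|]. apply Rinv_le_contravar; nra. }
  assert (Hc3 : Rabs ((T1 * F1 + T2 * F2) / (T1 + T2)) <= Fm).
  { apply Rabs_le_between in HF1, HF2. apply Rabs_le_between.
    split; [apply Rle_div_r | apply Rle_div_l]; nra. }
  replace (g * DL / (2 * T1 * (T1 + T2))) with (g / (2 * T1 * (T1 + T2)) * DL) by (field; lra).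
  replace (g * DR / (2 * T2 * (T1 + T2))) with (g / (2 * T2 * (T1 + T2)) * DR) by (field; lra).
  assert (0 <= g / (2 * T1 * (T1 + T2))) by (apply Rdiv_le_0_compat; nra).
  assert (0 <= g / (2 * T2 * (T1 + T2))) by (apply Rdiv_le_0_compat; nra).
  pose proof (Rabs_pos DL). pose proof (Rabs_pos DR).
  unfold Rminus. eapply Rle_trans; [apply Rabs_triang|]. rewrite Rabs_Ropp.
  eapply Rle_trans; [apply Rplus_le_compat_r, Rabs_triang|].
  rewrite !Rabs_mult, !(Rabs_pos_eq (g / _)) by assumption.
  apply Rplus_le_compat; [apply Rplus_le_compat|exact Hc3]; apply Rmult_le_compat_r; lra.
Qed.

Lemma shishkin_mesh_transition eps m N : (0 < N)%nat -> (N mod 4 = 0)%nat ->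
  let lam := shishkin_lambda eps m N in
  shishkin_mesh eps m N (N / 4 - 1) = lam - 4 * lam / INR N /\
  shishkin_mesh eps m N (N / 4) = lam /\
  shishkin_mesh eps m N (N / 4 + 1) = lam + 2 * (1 - 2 * lam) / INR N.
Proof.
  intros HN HN4 lam.
  set (q := (N / 4)%nat).
  assert (HNq : N = (4 * q)%nat) by (unfold q; pose proof (Nat.div_mod N 4); lia).
  assert (H34 : (3 * N / 4 = 3 * q)%nat).
  { rewrite HNq. replace (3 * (4 * q))%nat with (3 * q * 4)%nat by lia. apply Nat.div_mul; lia. }
  assert (HNr : INR N = 4 * INR q) by (rewrite HNq, mult_INR; simpl; ring).
  assert (Hq : 0 < INR q) by (apply lt_0_INR; lia).
  unfold shishkin_mesh. fold lam q. rewrite H34.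
  replace (q - 1 <=? q)%nat with true by (symmetry; apply Nat.leb_le; lia).
  replace (q <=? q)%nat with true by (symmetry; apply Nat.leb_le; lia).
  replace (q + 1 <=? q)%nat with false by (symmetry; apply Nat.leb_gt; lia).
  replace (q + 1 <=? 3 * q)%nat with true by (symmetry; apply Nat.leb_le; lia).
  replace (q + 1 - q)%nat with 1%nat by lia.
  rewrite minus_INR by lia. change (INR 1) with 1. rewrite HNr.
  split; [|split]; field; lra.
Qed.

Section Transition.

Variables (f : R -> R -> R) (m gamma C0 Mf M0 C1 Kx : R).
Hypothesis m_pos : 0 < m.
Hypothesis gamma_pos : 0 < gamma.
Hypothesis C0_pos : 0 < C0.
Hypothesis M0_nonneg : 0 <= M0.
Hypothesis C1_nonneg : 0 <= C1.
Hypothesis Kx_nonneg : 0 <= Kx.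
Hypothesis f_lipv : forall x u v, 0 <= x <= 1 -> Rabs (f x u - f x v) <= gamma * Rabs (u - v).
Hypothesis f_bound0 : forall x, 0 <= x <= 1 -> Rabs (f x 0) <= Mf.
Hypothesis f_lipx : forall x1 x2 v, 0 < x1 < 1 -> 0 < x2 < 1 -> Rabs v <= M0 ->
  Rabs (f x1 v - f x2 v) <= Kx * Rabs (x1 - x2).

(* Lower bound for [tanh_half (beta H)], as [beta H >= sqrt gamma / (eps N) >= sqrt gamma / C0]. *)
Definition tanh_lower : R := sqrt gamma / C0 / (2 + sqrt gamma / C0).

(* For [N >= N_large], [2 / N + 2 eps <= 1 / 2]: the stencil and the second differences of
   step [eps] used below stay away from both layers. *)
Definition N_large : R := 4 * C0 + 4.

(* [exp 8 / N^2] bounds the layer terms at distance [lam - h] from the boundary (layer_decay). *)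
Definition incr_const : R := C1 + 4 * M0 * exp 8.

Definition interior_f_const : R :=
  2 * incr_const * (C0 + 1) + 2 * C0 * Kx + gamma * incr_const * (2 * C0 + 1).

Definition small_N_const : R :=
  gamma / (2 * tanh_lower) * (1 + N_large * sqrt m / (4 * sqrt gamma)) * (2 * M0)
  + gamma / (2 * tanh_lower * tanh_lower) * (2 * M0) + (Mf + gamma * M0).

Definition large_N_const : R :=
  gamma / (2 * tanh_lower) * incr_const * (2 + 2 * C0 / sqrt gamma + sqrt m / (4 * sqrt gamma))
  + gamma / (2 * tanh_lower * tanh_lower) * (3 * incr_const)
  + (interior_f_const + 2 * gamma * incr_const).

Definition transition_const : R := Rmax large_N_const (N_large * small_N_const).

Lemma tanh_lower_pos : 0 < tanh_lower.
Proof.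
  assert (0 < sqrt gamma / C0) by (apply Rdiv_lt_0_compat; [apply sqrt_lt_R0|]; lra).
  unfold tanh_lower. apply Rdiv_lt_0_compat; lra.
Qed.

Lemma incr_const_ge : C1 <= incr_const /\ 4 * M0 * exp 8 <= incr_const.
Proof. pose proof (exp_pos 8). unfold incr_const. split; nra. Qed.

Section Mesh.

Variables (eps : R) (N : nat) (y : R -> R).
Hypothesis eps_pos : 0 < eps.
Hypothesis N_pos : (0 < N)%nat.
Hypothesis N_mod4 : (N mod 4 = 0)%nat.
Hypothesis lam_eq : shishkin_lambda eps m N = 2 * eps * ln (INR N) / sqrt m.
Hypothesis eps_le : eps <= C0 / INR N.
Hypothesis y_bound : forall x, 0 <= x <= 1 -> Rabs (y x) <= M0.
Hypothesis y_incr : forall d x, 0 < d < 1 -> 0 <= x <= 1 - d ->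
  Rabs (y (x + d) - y x)
  <= d * C1 + 2 * M0 * (exp (- (sqrt m / eps) * x) + exp (- (sqrt m / eps) * (1 - d - x))).
Hypothesis y_second : forall s x, 0 < s -> 0 <= x -> x + 2 * s <= 1 ->
  exists z, x < z < x + 2 * s /\
    eps ^ 2 * (y (x + 2 * s) - 2 * y (x + s) + y x) = s ^ 2 * f z (y z).

Let lam := shishkin_lambda eps m N.
Let h := 4 * lam / INR N.
Let H := 2 * (1 - 2 * lam) / INR N.
Let Fq := F_op gamma eps f (shishkin_mesh eps m N) N (fun i => y (shishkin_mesh eps m N i)) (N / 4).

Lemma N_ge4 : 4 <= INR N.
Proof.
  replace 4 with (INR 4) by (simpl; ring). apply le_INR.
  pose proof (Nat.div_mod N 4). pose proof (Nat.mod_upper_bound N 4). lia.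
Qed.

Lemma ln_N_ge1 : 1 <= ln (INR N).
Proof.
  pose proof N_ge4. pose proof exp_le_3.
  rewrite <- (ln_exp 1). apply ln_le; [apply exp_pos | lra].
Qed.

Lemma ln_N_lt : ln (INR N) < INR N.
Proof.
  pose proof N_ge4. pose proof (exp_ineq1_le (ln (INR N))) as Hexp.
  rewrite exp_ln in Hexp; lra.
Qed.

Lemma eps_N_le : eps * INR N <= C0.
Proof.
  pose proof N_ge4. apply Rle_div_r in eps_le; [|lra]. lra.
Qed.

Lemma lam_bounds : 0 < lam <= 1 / 4.
Proof.
  pose proof ln_N_ge1. pose proof (sqrt_lt_R0 m m_pos). split.
  - unfold lam. rewrite lam_eq. apply Rdiv_lt_0_compat; nra.
  - unfold lam, shishkin_lambda. apply Rmin_l.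
Qed.

Lemma h_bounds : 0 < h <= lam /\ h <= 1 / INR N.
Proof.
  pose proof N_ge4. pose proof lam_bounds. unfold h.
  split; [split|]; [apply Rdiv_lt_0_compat; lra | apply Rle_div_l; nra | apply Rmult_le_compat_r].
  - left. apply Rinv_0_lt_compat. lra.
  - lra.
Qed.

Lemma H_bounds : 1 / INR N <= H <= 2 / INR N.
Proof.
  pose proof N_ge4. pose proof lam_bounds. unfold H.
  split; apply Rmult_le_compat_r; try (left; apply Rinv_0_lt_compat); lra.
Qed.

Lemma inv_N2_le : 1 / INR N ^ 2 <= 1 / INR N.
Proof.
  pose proof N_ge4. apply Rmult_le_compat_l; [lra|]. apply Rinv_le_contravar; nra.
Qed.

Lemma two_div_beta_h : 2 / (sqrt gamma / eps * h) = sqrt m * INR N / (4 * sqrt gamma * ln (INR N)).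
Proof.
  pose proof N_ge4. pose proof ln_N_ge1.
  pose proof (sqrt_lt_R0 m m_pos). pose proof (sqrt_lt_R0 gamma gamma_pos).
  unfold h, lam. rewrite lam_eq. field. repeat split; lra.
Qed.

Lemma transition_residual_le Fm :
  Rabs (f ((lam - h + lam) / 2) ((y (lam - h) + y lam) / 2)) <= Fm ->
  Rabs (f ((lam + (lam + H)) / 2) ((y lam + y (lam + H)) / 2)) <= Fm ->
  Rabs Fq <= gamma / (2 * tanh_lower) * (1 + 2 / (sqrt gamma / eps * h))
               * Rabs (y (lam - h) - y lam)
            + gamma / (2 * tanh_lower * tanh_lower) * Rabs (y (lam + H) - y lam) + Fm.
Proof.
  intros HF1 HF2.
  pose proof N_ge4. pose proof h_bounds. pose proof H_bounds. pose proof eps_N_le.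
  destruct (shishkin_mesh_transition eps m N N_pos N_mod4) as [Xl [Xq Xr]].
  fold lam h H in Xl, Xq, Xr.
  assert (Hq : (0 < N / 4 < N)%nat).
  { pose proof (Nat.div_mod N 4). pose proof (Nat.mod_upper_bound N 4). lia. }
  assert (Hb : 0 < sqrt gamma / eps) by (apply Rdiv_lt_0_compat; [apply sqrt_lt_R0|]; lra).
  assert (Hbh : 0 < sqrt gamma / eps * h) by (apply Rmult_lt_0_compat; lra).
  assert (HbH : sqrt gamma / C0 <= sqrt gamma / eps * H).
  { pose proof (sqrt_lt_R0 gamma gamma_pos).
    apply Rle_trans with (sqrt gamma / eps * (1 / INR N)); [|apply Rmult_le_compat_l; lra].
    replace (sqrt gamma / eps * (1 / INR N)) with (sqrt gamma / (eps * INR N)) by (field; lra).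
    apply Rmult_le_compat_l; [lra|]. apply Rinv_le_contravar; nra. }
  pose proof (F_op_interior gamma eps f (shishkin_mesh eps m N) N
                (fun i => y (shishkin_mesh eps m N i)) (N / 4) gamma_pos eps_pos Hq) as HF.
  cbv zeta beta in HF. rewrite Xl, Xq, Xr in HF.
  replace (lam - (lam - h)) with h in HF by ring. replace (lam + H - lam) with H in HF by ring.
  unfold Fq. rewrite HF by lra.
  assert (HT1 := tanh_half_pos _ Hbh). assert (HiT1 := inv_tanh_half_le _ Hbh).
  assert (HT2 : tanh_lower <= tanh_half (sqrt gamma / eps * H)).
  { apply tanh_half_ge. split; [apply Rdiv_lt_0_compat; [apply sqrt_lt_R0|]|]; lra. }
  eapply Rle_trans; [apply tanh_form_abs_le; eauto; split; [apply tanh_lower_pos|exact HT2]|].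
  pose proof tanh_lower_pos. pose proof (Rabs_pos (y (lam - h) - y lam)).
  apply Rplus_le_compat_r, Rplus_le_compat_r. rewrite Rmult_assoc, (Rmult_assoc (_ / _)).
  apply Rmult_le_compat_l; [apply Rdiv_le_0_compat; lra|]. apply Rmult_le_compat_r; lra.
Qed.

Lemma transition_residual_le_small : INR N <= N_large -> Rabs Fq <= small_N_const.
Proof.
  intros HN.
  pose proof N_ge4. pose proof ln_N_ge1. pose proof lam_bounds.
  pose proof h_bounds. pose proof H_bounds.
  assert (HN1 : 2 / INR N <= 1 / 2) by (apply Rle_div_l; lra).
  assert (Hdiff : forall a b, 0 <= a <= 1 -> 0 <= b <= 1 -> Rabs (y a - y b) <= 2 * M0).
  { intros a b Ha Hb.
    pose proof (y_bound a Ha) as Ya. pose proof (y_bound b Hb) as Yb.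
    apply Rabs_le_between in Ya, Yb. apply Rabs_le_between. lra. }
  assert (Hf : forall x a b, 0 <= x <= 1 -> 0 <= a <= 1 -> 0 <= b <= 1 ->
             Rabs (f x ((y a + y b) / 2)) <= Mf + gamma * M0).
  { intros x a b Hx Ha Hb.
    pose proof (f_lipv x ((y a + y b) / 2) 0 Hx) as Hl. pose proof (f_bound0 x Hx).
    pose proof (y_bound a Ha) as Ya. pose proof (y_bound b Hb) as Yb.
    assert (Rabs ((y a + y b) / 2 - 0) <= M0).
    { apply Rabs_le_between in Ya, Yb. apply Rabs_le_between. lra. }
    replace (f x ((y a + y b) / 2)) with ((f x ((y a + y b) / 2) - f x 0) + f x 0) by ring.
    eapply Rle_trans; [apply Rabs_triang|]. nra. }
  eapply Rle_trans; [apply transition_residual_le; apply Hf; lra|].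
  assert (Hr : 1 + 2 / (sqrt gamma / eps * h) <= 1 + N_large * sqrt m / (4 * sqrt gamma)).
  { pose proof (sqrt_lt_R0 m m_pos). pose proof (sqrt_lt_R0 gamma gamma_pos).
    rewrite two_div_beta_h. apply Rplus_le_compat_l.
    apply Rle_trans with (sqrt m * INR N / (4 * sqrt gamma)); unfold Rdiv.
    - apply Rmult_le_compat_l; [nra|]. apply Rinv_le_contravar; nra.
    - apply Rmult_le_compat_r; [left; apply Rinv_0_lt_compat|]; nra. }
  pose proof tanh_lower_pos.
  assert (0 <= gamma / (2 * tanh_lower)) by (apply Rdiv_le_0_compat; lra).
  assert (0 <= gamma / (2 * tanh_lower * tanh_lower)) by (apply Rdiv_le_0_compat; nra).
  pose proof (Hdiff (lam - h) lam ltac:(lra) ltac:(lra)).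
  pose proof (Hdiff (lam + H) lam ltac:(lra) ltac:(lra)).
  pose proof (Rabs_pos (y (lam - h) - y lam)).
  unfold small_N_const. apply Rplus_le_compat_r, Rplus_le_compat.
  - assert (0 <= 2 / (sqrt gamma / eps * h)).
    { apply Rdiv_le_0_compat; [lra|]. apply Rmult_lt_0_compat; [|lra].
      apply Rdiv_lt_0_compat; [apply sqrt_lt_R0|]; lra. }
    apply Rmult_le_compat; [apply Rmult_le_pos| | apply Rmult_le_compat_l |]; lra.
  - apply Rmult_le_compat_l; lra.
Qed.

Lemma layer_decay t : lam - h <= t -> exp (- (sqrt m / eps) * t) <= exp 8 / INR N ^ 2.
Proof.
  intros Ht.
  pose proof N_ge4. pose proof ln_N_ge1. pose proof ln_N_lt.
  assert (Hk : 0 < sqrt m / eps) by (apply Rdiv_lt_0_compat; [apply sqrt_lt_R0|]; lra).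
  assert (Hkl : sqrt m / eps * (lam - h) = 2 * ln (INR N) - 8 * (ln (INR N) / INR N)).
  { pose proof (sqrt_lt_R0 m m_pos).
    unfold h, lam. rewrite lam_eq. field. repeat split; apply Rgt_not_eq; lra. }
  assert (ln (INR N) / INR N < 1) by (apply Rlt_div_l; lra).
  replace (exp 8 / INR N ^ 2) with (exp (8 - 2 * ln (INR N))).
  - apply Rlt_le, exp_increasing. nra.
  - replace (2 * ln (INR N)) with (ln (INR N ^ 2)) by (rewrite ln_pow; [simpl; ring | lra]).
    unfold Rminus. rewrite exp_plus, exp_Ropp, exp_ln by (apply pow_lt; lra). reflexivity.
Qed.

Lemma layer_free_increment d x : 0 < d < 1 -> lam - h <= x -> x + d <= 1 - (lam - h) ->
  Rabs (y (x + d) - y x) <= incr_const * (d + 1 / INR N ^ 2).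
Proof.
  intros Hd Hx Hxd.
  pose proof h_bounds. pose proof lam_bounds.
  eapply Rle_trans; [apply y_incr; lra|].
  pose proof (layer_decay x Hx). pose proof (layer_decay (1 - d - x) ltac:(lra)).
  destruct incr_const_ge.
  assert (exp 8 / INR N ^ 2 = exp 8 * (1 / INR N ^ 2)) by (unfold Rdiv; ring).
  assert (0 <= 1 / INR N ^ 2)
    by (pose proof N_ge4; apply Rdiv_le_0_compat; [lra|apply pow_lt; lra]).
  nra.
Qed.

(* Up to moving [x] by at most [2 eps], [f x (y x) = eps^2 y''(x)] is a second difference of [y]
   with step [eps <= C0 / N]. *)
Lemma interior_f_le x : 0 < x -> lam - h <= x -> x + 2 * eps <= 1 - (lam - h) ->
  Rabs (f x (y x)) <= interior_f_const / INR N.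
Proof.
  intros Hx0 Hx Hx2.
  pose proof N_ge4. pose proof h_bounds. pose proof lam_bounds. pose proof eps_N_le.
  pose proof inv_N2_le. destruct incr_const_ge.
  set (A := incr_const) in *. set (e := 1 / INR N ^ 2) in *.
  assert (He : 0 <= e) by (apply Rdiv_le_0_compat; [lra|apply pow_lt; lra]).
  destruct (y_second eps x eps_pos ltac:(lra) ltac:(lra)) as [z [Hz Heq]].
  assert (Hfz : f z (y z) = (y (x + 2 * eps) - y (x + eps)) - (y (x + eps) - y x)).
  { apply (Rmult_eq_reg_l (eps ^ 2)); [|apply pow_nonzero; lra]. rewrite <- Heq. ring. }
  assert (D1 : Rabs (y (x + eps + eps) - y (x + eps)) <= A * (eps + e))
    by (apply layer_free_increment; lra).
  assert (D2 : Rabs (y (x + eps) - y x) <= A * (eps + e)) by (apply layer_free_increment; lra).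
  assert (D3 : Rabs (y (x + (z - x)) - y x) <= A * ((z - x) + e))
    by (apply layer_free_increment; lra).
  replace (x + eps + eps) with (x + 2 * eps) in D1 by ring.
  replace (x + (z - x)) with z in D3 by ring.
  assert (L1 : Rabs (f x (y x) - f z (y x)) <= Kx * (2 * eps)).
  { eapply Rle_trans; [apply f_lipx; try lra; apply y_bound; lra|].
    rewrite Rabs_minus_sym, Rabs_pos_eq by lra. apply Rmult_le_compat_l; lra. }
  assert (L2 : Rabs (f z (y x) - f z (y z)) <= gamma * (A * (2 * eps + e))).
  { eapply Rle_trans; [apply f_lipv; lra|]. rewrite Rabs_minus_sym.
    apply Rmult_le_compat_l; [lra|]. eapply Rle_trans; [exact D3|].
    apply Rmult_le_compat_l; lra. }
  assert (L3 : Rabs (f z (y z)) <= 2 * A * (eps + e)).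
  { rewrite Hfz. unfold Rminus at 1. eapply Rle_trans; [apply Rabs_triang|].
    rewrite Rabs_Ropp. lra. }
  replace (f x (y x)) with ((f x (y x) - f z (y x)) + (f z (y x) - f z (y z)) + f z (y z)) by ring.
  eapply Rle_trans; [apply Rabs_triang|].
  eapply Rle_trans; [apply Rplus_le_compat_r, Rabs_triang|].
  assert (eps <= C0 / INR N) by exact eps_le.
  replace (interior_f_const / INR N) with
    (2 * A * (C0 / INR N + 1 / INR N) + Kx * (2 * (C0 / INR N))
     + gamma * (A * (2 * (C0 / INR N) + 1 / INR N)))
    by (unfold interior_f_const; fold A; field; lra).
  assert (2 * A * (eps + e) <= 2 * A * (C0 / INR N + 1 / INR N)) by (apply Rmult_le_compat_l; lra).
  assert (Kx * (2 * eps) <= Kx * (2 * (C0 / INR N))) by (apply Rmult_le_compat_l; lra).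
  assert (A * (2 * eps + e) <= A * (2 * (C0 / INR N) + 1 / INR N))
    by (apply Rmult_le_compat_l; lra).
  assert (gamma * (A * (2 * eps + e)) <= gamma * (A * (2 * (C0 / INR N) + 1 / INR N)))
    by (apply Rmult_le_compat_l; lra).
  lra.
Qed.

Lemma midpoint_f_le a b : lam - h <= a < b -> b - a <= 2 / INR N ->
  b + 2 * eps <= 1 - (lam - h) ->
  Rabs (f ((a + b) / 2) ((y a + y b) / 2)) <= (interior_f_const + 2 * gamma * incr_const) / INR N.
Proof.
  intros Ha Hab Hb.
  pose proof N_ge4. pose proof h_bounds. pose proof lam_bounds. pose proof inv_N2_le.
  destruct incr_const_ge.
  set (A := incr_const) in *. set (e := 1 / INR N ^ 2) in *. set (c := (a + b) / 2).
  assert (Hhalf : (b - a) / 2 <= 1 / INR N) by lra.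
  assert (E1 : Rabs (y (a + (b - a) / 2) - y a) <= A * ((b - a) / 2 + e))
    by (apply layer_free_increment; lra).
  assert (E2 : Rabs (y (c + (b - a) / 2) - y c) <= A * ((b - a) / 2 + e))
    by (apply layer_free_increment; unfold c; lra).
  replace (a + (b - a) / 2) with c in E1 by (unfold c; field).
  replace (c + (b - a) / 2) with b in E2 by (unfold c; field).
  assert (E3 : Rabs ((y a + y b) / 2 - y c) <= A * (2 / INR N)).
  { apply Rabs_le_between in E1, E2. apply Rabs_le_between.
    assert (A * ((b - a) / 2 + e) <= A * (2 / INR N)) by (apply Rmult_le_compat_l; lra). lra. }
  assert (E4 : Rabs (f c (y c)) <= interior_f_const / INR N)
    by (apply interior_f_le; unfold c; lra).
  assert (E5 : Rabs (f c ((y a + y b) / 2) - f c (y c)) <= gamma * (A * (2 / INR N))).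
  { eapply Rle_trans; [apply f_lipv; unfold c; lra|]. apply Rmult_le_compat_l; lra. }
  replace (f c ((y a + y b) / 2)) with ((f c ((y a + y b) / 2) - f c (y c)) + f c (y c)) by ring.
  eapply Rle_trans; [apply Rabs_triang|].
  replace ((interior_f_const + 2 * gamma * A) / INR N)
    with (gamma * (A * (2 / INR N)) + interior_f_const / INR N) by (field; lra).
  lra.
Qed.

Lemma left_increment_le :
  (1 + 2 / (sqrt gamma / eps * h)) * Rabs (y (lam - h) - y lam)
  <= incr_const * (2 + 2 * C0 / sqrt gamma + sqrt m / (4 * sqrt gamma)) / INR N.
Proof.
  pose proof N_ge4. pose proof ln_N_ge1. pose proof h_bounds. pose proof lam_bounds.
  pose proof inv_N2_le. pose proof eps_N_le. destruct incr_const_ge.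
  pose proof (sqrt_lt_R0 m m_pos). pose proof (sqrt_lt_R0 gamma gamma_pos).
  set (A := incr_const) in *. set (e := 1 / INR N ^ 2) in *.
  set (r := 2 / (sqrt gamma / eps * h)).
  assert (Hr0 : 0 <= r).
  { apply Rdiv_le_0_compat; [lra|]. apply Rmult_lt_0_compat; [apply Rdiv_lt_0_compat|]; lra. }
  assert (Hdl : Rabs (y (lam - h) - y lam) <= A * (h + e)).
  { rewrite Rabs_minus_sym. replace lam with (lam - h + h) at 1 by ring.
    apply layer_free_increment; lra. }
  assert (Hrh : r * h <= 2 * C0 / sqrt gamma / INR N).
  { unfold r. replace (2 / (sqrt gamma / eps * h) * h) with (2 * eps / sqrt gamma) by (field; lra).
    replace (2 * C0 / sqrt gamma / INR N) with (2 * (C0 / INR N) / sqrt gamma) by (field; lra).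
    apply Rmult_le_compat_r; [left; apply Rinv_0_lt_compat; lra|]. lra. }
  assert (Hre : r * e <= sqrt m / (4 * sqrt gamma) / INR N).
  { unfold r, e. rewrite two_div_beta_h.
    replace (sqrt m * INR N / (4 * sqrt gamma * ln (INR N)) * (1 / INR N ^ 2))
      with (sqrt m / (4 * sqrt gamma) / INR N * / ln (INR N)) by (field; lra).
    rewrite <- (Rmult_1_r (sqrt m / (4 * sqrt gamma) / INR N)) at 2.
    apply Rmult_le_compat_l; [apply Rdiv_le_0_compat; [apply Rdiv_le_0_compat|]; lra|].
    rewrite <- Rinv_1. apply Rinv_le_contravar; lra. }
  apply Rle_trans with ((1 + r) * (A * (h + e))); [apply Rmult_le_compat_l; lra|].
  replace ((1 + r) * (A * (h + e))) with (A * (h + e + r * h + r * e)) by ring.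
  replace (A * (2 + 2 * C0 / sqrt gamma + sqrt m / (4 * sqrt gamma)) / INR N)
    with (A * (1 / INR N + 1 / INR N + 2 * C0 / sqrt gamma / INR N
               + sqrt m / (4 * sqrt gamma) / INR N))
    by (field; lra).
  apply Rmult_le_compat_l; lra.
Qed.

Lemma right_increment_le : Rabs (y (lam + H) - y lam) <= 3 * incr_const / INR N.
Proof.
  pose proof N_ge4. pose proof h_bounds. pose proof H_bounds. pose proof lam_bounds.
  pose proof inv_N2_le. destruct incr_const_ge.
  assert (2 / INR N <= 1 / 2) by (apply Rle_div_l; lra).
  eapply Rle_trans; [apply layer_free_increment; lra|].
  replace (3 * incr_const / INR N) with (incr_const * (2 / INR N + 1 / INR N)) by (field; lra).
  apply Rmult_le_compat_l; lra.
Qed.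

Lemma transition_residual_le_large : N_large <= INR N -> Rabs Fq <= large_N_const / INR N.
Proof.
  intros HN.
  pose proof N_ge4. pose proof h_bounds. pose proof H_bounds. pose proof lam_bounds.
  pose proof eps_N_le.
  assert (Hroom : 2 / INR N + 2 * eps <= 1 / 2).
  { replace (2 / INR N + 2 * eps) with ((2 + 2 * (eps * INR N)) / INR N) by (field; lra).
    apply Rle_div_l; unfold N_large in HN; lra. }
  eapply Rle_trans;
    [apply (transition_residual_le ((interior_f_const + 2 * gamma * incr_const) / INR N))|].
  - apply midpoint_f_le; lra.
  - apply midpoint_f_le; lra.
  - pose proof tanh_lower_pos. pose proof left_increment_le. pose proof right_increment_le.
    assert (0 <= gamma / (2 * tanh_lower)) by (apply Rdiv_le_0_compat; lra).
    assert (0 <= gamma / (2 * tanh_lower * tanh_lower)) by (apply Rdiv_le_0_compat; nra).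
    rewrite Rmult_assoc.
    apply Rle_trans with
      (gamma / (2 * tanh_lower)
         * (incr_const * (2 + 2 * C0 / sqrt gamma + sqrt m / (4 * sqrt gamma)) / INR N)
       + gamma / (2 * tanh_lower * tanh_lower) * (3 * incr_const / INR N)
       + (interior_f_const + 2 * gamma * incr_const) / INR N).
    + apply Rplus_le_compat_r, Rplus_le_compat; apply Rmult_le_compat_l; assumption.
    + pose proof (sqrt_lt_R0 gamma gamma_pos). unfold large_N_const. right.
      field. repeat split; apply Rgt_not_eq; lra.
Qed.

End Mesh.

Lemma transition_residual_bound eps N y : 0 < eps -> (0 < N)%nat -> (N mod 4 = 0)%nat ->
  shishkin_lambda eps m N = 2 * eps * ln (INR N) / sqrt m -> eps <= C0 / INR N ->
  (forall x, 0 <= x <= 1 -> Rabs (y x) <= M0) ->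
  (forall d x, 0 < d < 1 -> 0 <= x <= 1 - d ->
     Rabs (y (x + d) - y x)
     <= d * C1 + 2 * M0 * (exp (- (sqrt m / eps) * x) + exp (- (sqrt m / eps) * (1 - d - x)))) ->
  (forall s x, 0 < s -> 0 <= x -> x + 2 * s <= 1 ->
     exists z, x < z < x + 2 * s /\
       eps ^ 2 * (y (x + 2 * s) - 2 * y (x + s) + y x) = s ^ 2 * f z (y z)) ->
  Rabs (F_op gamma eps f (shishkin_mesh eps m N) N (fun i => y (shishkin_mesh eps m N i)) (N / 4))
  <= transition_const / INR N.
Proof.
  intros. unfold transition_const.
  pose proof (N_ge4 N ltac:(assumption) ltac:(assumption)).
  destruct (Rle_or_lt N_large (INR N)) as [HN|HN].
  - eapply Rle_trans; [eapply transition_residual_le_large; eauto|].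
    apply Rmult_le_compat_r; [left; apply Rinv_0_lt_compat; lra | apply Rmax_l].
  - assert (Hs : Rabs (F_op gamma eps f (shishkin_mesh eps m N) N
                   (fun i => y (shishkin_mesh eps m N i)) (N / 4)) <= small_N_const)
      by (eapply transition_residual_le_small; eauto; lra).
    pose proof (Rabs_pos (F_op gamma eps f (shishkin_mesh eps m N) N
                  (fun i => y (shishkin_mesh eps m N i)) (N / 4))).
    apply Rle_trans with (N_large * small_N_const / INR N).
    + apply Rle_div_r; nra.
    + apply Rmult_le_compat_r; [left; apply Rinv_0_lt_compat; lra | apply Rmax_r].
Qed.

End Transition.

Lemma C2_strip_monotone f fy m gamma : C2_strip f fy ->
  (forall x v, 0 <= x <= 1 -> m <= fy x v) -> (forall x v, 0 <= x <= 1 -> fy x v <= gamma) ->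
  forall x u v, 0 <= x <= 1 -> v <= u -> m * (u - v) <= f x u - f x v <= gamma * (u - v).
Proof.
  intros [fx [fxx [fxy [fyx [fyy [_ [_ [_ [_ [_ [_ [_ [_ Hdy]]]]]]]]]]]]] Hlo Hhi x u v Hx.
  apply (MVT_increment_between (f x) (fy x)); intros w.
  - apply Hdy, Hx.
  - split; [apply Hlo | apply Hhi]; exact Hx.
Qed.

Lemma C2_strip_lipschitz_x f fy M : C2_strip f fy -> 0 <= M ->
  exists Kx, 0 <= Kx /\ forall x1 x2 v, 0 < x1 < 1 -> 0 < x2 < 1 -> Rabs v <= M ->
    Rabs (f x1 v - f x2 v) <= Kx * Rabs (x1 - x2).
Proof.
  intros [fx [fxx [fxy [fyx [fyy [_ [Hcfx [_ [_ [_ [_ [_ [Hdx _]]]]]]]]]]]]] HM.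
  destruct (cont_on_strip_bounded fx M Hcfx HM) as [Kx [HKx0 HKx]].
  exists Kx. split; [exact HKx0|]. intros x1 x2 v Hx1 Hx2 Hv.
  apply (MVT_lipschitz (fun t => f t v) (fun t => fx t v) 0 1); auto.
  - intros t Ht. apply Hdx, Ht.
  - intros t Ht. apply HKx; [lra | apply Rabs_le_between, Hv].
Qed.

Theorem lemma2 (f fy : R -> R -> R) (m gamma C0 : R) :
  C2_strip f fy ->
  0 < m ->
  (forall x v, 0 <= x <= 1 -> m <= fy x v) ->
  (forall x v, 0 <= x <= 1 -> fy x v <= gamma) ->
  0 < C0 ->
  exists C : R, 0 < C /\
    forall (eps : R) (N : nat) (y : R -> R),
      0 < eps ->
      (0 < N)%nat -> (N mod 4 = 0)%nat ->
      shishkin_lambda eps m N = 2 * eps * ln (INR N) / sqrt m ->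
      eps <= C0 / INR N ->
      is_solution eps f y ->
      Rabs (F_op gamma eps f (shishkin_mesh eps m N) N
              (fun i => y (shishkin_mesh eps m N i)) (N / 4)%nat)
        <= C / INR N.
Proof.
  intros HC2 Hm Hlo Hhi HC0.
  assert (Hgamma : 0 < gamma) by (specialize (Hlo 0 0); specialize (Hhi 0 0); lra).
  pose proof (C2_strip_monotone f fy m gamma HC2 Hlo Hhi) as Hmono.
  assert (Hlipv : forall x u v, 0 <= x <= 1 -> Rabs (f x u - f x v) <= gamma * Rabs (u - v)).
  { intros x u v Hx. apply (increment_between_abs_le (f x) m); [lra|]. intros; apply Hmono; auto. }
  pose proof HC2 as [fx [fxx [fxy [fyx [fyy [Hcf _]]]]]].
  destruct (cont_on_strip_bounded f 0 Hcf (Rle_refl 0)) as [Mf [HMf0 HMf]].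
  assert (HM0 : 0 <= Mf / m) by (apply Rdiv_le_0_compat; lra).
  destruct (C2_strip_lipschitz_x f fy (Mf / m) HC2 HM0) as [Kx [HKx0 Hlipx]].
  exists (Rmax 1 (transition_const m gamma C0 Mf (Mf / m) (Kx / m) Kx)).
  split; [apply Rlt_le_trans with 1; [lra | apply Rmax_l]|].
  intros eps N y He HN HN4 Hlam HeN Hsol.
  assert (Hf0 : forall x, 0 <= x <= 1 -> Rabs (f x 0) <= Mf) by (intros; apply HMf; lra).
  assert (Hmono_lo : forall x u v, 0 <= x <= 1 -> v <= u -> m * (u - v) <= f x u - f x v)
    by (intros; apply Hmono; auto).
  eapply Rle_trans.
  - apply (transition_residual_bound f m gamma C0 Mf (Mf / m) (Kx / m) Kx); auto.
    + apply Rdiv_le_0_compat; lra.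
    + intros x Hx. apply (solution_abs_le f m Mf eps y); auto.
    + intros d x Hd Hx. apply (solution_increment_abs_le f m Mf Kx eps y); auto.
    + intros s x. apply (solution_second_difference f m eps y); auto.
  - apply Rmult_le_compat_r; [left; apply Rinv_0_lt_compat, lt_0_INR, HN | apply Rmax_r].
Qed.
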